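(* Let $G$ be an étale groupoid and let $F\subset G^{(0)}$ be an open $G$-full subset. (1) If there is a continuous map $\theta:G^{(0)}\to G$ with $r(\theta(x))=x$ and $s(\theta(x))\in F$ for all $x\in G^{(0)}$, then $G$ is homologically similar to $G|F$. (2) If $G^{(0)}$ is $\sigma$-compact and totally disconnected, then $G$ is homologically similar to $G|F$.
   Context: An étale groupoid is a locally compact Hausdorff groupoid whose range map $r$ is a local homeomorphism; $s$ is the source map. $F\subset G^{(0)}$ is $G$-full if for every $x\in G^{(0)}$ there is $g$ with $r(g)=x$, $s(g)\in F$. $G|F=r^{-1}(F)\cap s^{-1}(F)$ is the reduction (an étale subgroupoid). A homomorphism is a continuous map preserving products of composable pairs; it is étale if it is a local homeomorphism. Homomorphisms $\rho,\sigma:G\to H$ are similar if there is continuous $\theta:G^{(0)}\to H$ with $\theta(r(g))\rho(g)=\sigma(g)\theta(s(g))$ for all $g$. $G,H$ are homologically similar if there are étale homomorphisms $\rho:G\to H$, $\sigma:H\to G$ with $\sigma\circ\rho$ similar to $\mathrm{id}_G$ and $\rho\circ\sigma$ similar to $\mathrm{id}_H$. *)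

(* Étale groupoids whose arrow space is a subset
   [garr G] of an ambient topological type, with the subspace topology. *)
From HB Require Import structures.
From mathcomp Require Import all_boot all_order all_algebra.
From mathcomp Require Import all_classical all_reals all_analysis.
Set Implicit Arguments. Unset Strict Implicit. Unset Printing Implicit Defensive.
Local Open Scope classical_set_scope.

Record groupoid_data (T : topologicalType) := GroupoidData {
  garr : set T;
  grg : T -> T;
  gsr : T -> T;
  gmul : T -> T -> T;
  ginv : T -> T }.

Section Defs.
Context {T : topologicalType}.
Implicit Types G : groupoid_data T.

Definition units G : set T := grg G @` garr G.

Definition composable G (g h : T) :=
  garr G g /\ garr G h /\ gsr G g = grg G h.

Definition is_groupoid G :=
  [/\ (forall g, garr G g ->
        [/\ garr G (grg G g), garr G (gsr G g),
            grg G (grg G g) = grg G g /\ gsr G (grg G g) = grg G g &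
            grg G (gsr G g) = gsr G g /\ gsr G (gsr G g) = gsr G g]),
      (forall g h, composable G g h ->
        [/\ garr G (gmul G g h), grg G (gmul G g h) = grg G g
          & gsr G (gmul G g h) = gsr G h]),
      (forall g h k, composable G g h -> composable G h k ->
        gmul G (gmul G g h) k = gmul G g (gmul G h k)),
      (forall g, garr G g ->
        gmul G (grg G g) g = g /\ gmul G g (gsr G g) = g) &
      (forall g, garr G g ->
        [/\ garr G (ginv G g), grg G (ginv G g) = gsr G g,
            gsr G (ginv G g) = grg G g,
            gmul G g (ginv G g) = grg G g & gmul G (ginv G g) g = gsr G g])].

Definition rel_open (A U : set T) := exists2 V, open V & U = V `&` A.

Definition loc_compact_in (A : set T) :=
  forall x, A x -> exists U K, [/\ open U, U x, compact K,
                                   U `&` A `<=` K & K `<=` A].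

Definition is_topological_groupoid G :=
  [/\ is_groupoid G,
      {within garr G, continuous grg G},
      {within garr G, continuous gsr G},
      {within garr G, continuous ginv G} &
      {within [set p : T * T | composable G p.1 p.2],
         continuous (fun p => gmul G p.1 p.2)}].
End Defs.

Definition local_homeo_in {T T' : topologicalType} (A : set T) (B : set T')
    (f : T -> T') :=
  [/\ f @` A `<=` B,
      {within A, continuous f} &
      forall x, A x -> exists U : set T,
        [/\ open U, U x,
            {in U `&` A &, injective f} &
            forall W : set T, open W -> rel_open B (f @` (W `&` U `&` A))]].

Definition etale_groupoid {T : topologicalType} (G : groupoid_data T) :=
  [/\ is_topological_groupoid G,
      hausdorff_space (subspace (garr G)),
      loc_compact_in (garr G) &
      local_homeo_in (garr G) (units G) (grg G)].

Definition full {T : topologicalType} (G : groupoid_data T) (F : set T) :=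
  forall x, units G x -> exists g, [/\ garr G g, grg G g = x & F (gsr G g)].

Definition reduction {T : topologicalType} (G : groupoid_data T) (F : set T) :=
  GroupoidData (garr G `&` (grg G @^-1` F) `&` (gsr G @^-1` F))
               (grg G) (gsr G) (gmul G) (ginv G).

Definition homomorphism {T T' : topologicalType} (G : groupoid_data T)
    (H : groupoid_data T') (rho : T -> T') :=
  [/\ rho @` garr G `<=` garr H,
      {within garr G, continuous rho} &
      forall g h, composable G g h ->
        composable H (rho g) (rho h) /\
        rho (gmul G g h) = gmul H (rho g) (rho h)].

Definition etale_homomorphism {T T' : topologicalType} (G : groupoid_data T)
    (H : groupoid_data T') (rho : T -> T') :=
  homomorphism G H rho /\ local_homeo_in (garr G) (garr H) rho.

Definition similar {T T' : topologicalType} (G : groupoid_data T)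
    (H : groupoid_data T') (rho sigma : T -> T') :=
  exists theta : T -> T',
    [/\ {within units G, continuous theta},
        theta @` units G `<=` garr H &
        forall g, garr G g ->
          [/\ composable H (theta (grg G g)) (rho g),
              composable H (sigma g) (theta (gsr G g)) &
              gmul H (theta (grg G g)) (rho g) =
              gmul H (sigma g) (theta (gsr G g))]].

Definition homologically_similar {T T' : topologicalType}
    (G : groupoid_data T) (H : groupoid_data T') :=
  exists (rho : T -> T') (sigma : T' -> T),
    [/\ etale_homomorphism G H rho, etale_homomorphism H G sigma,
        similar G G (sigma \o rho) id & similar H H (rho \o sigma) id].

Definition sigma_compact {T : topologicalType} (A : set T) :=
  exists K : nat -> set T, (forall n, compact (K n) /\ K n `<=` A) /\
    A = \bigcup_n K n.

(* If [th] is a continuous section of [r] with [s \o th] landing in [F], then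
   rho g = th (r g)^-1 * g * th (s g) is a homomorphism G -> G|F, and [th]
   itself makes rho and the inclusion mutually inverse up to similarity. Both
   maps are etale: since [th] takes values in bisections, [s \o th] is a local
   homeomorphism of the unit space, and inverting it on both sides yields the
   local inverse y |-> th (psi1 (r y)) * y * th (psi2 (s y))^-1 of rho.
   Without a global section, fullness and etaleness still give continuous local
   sections into F. In a compact Hausdorff space quasi-components are
   components, so a locally compact, Hausdorff, totally disconnected unit space
   has compact open neighbourhoods inside their domains; by sigma-compactness
   countably many of them cover it, and taking at each unit the section of the
   first one containing it glues a global continuous section. *)

From Pilot Require Import Defs.
From HB Require Import structures.
From mathcomp Require Import all_boot all_order all_algebra.
From mathcomp Require Import all_classical all_reals all_analysis.
Local Open Scope classical_set_scope.
Set Implicit Arguments. Unset Strict Implicit.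

(** * Relative continuity and local homeomorphisms *)

Definition continuous_in_at {T U : topologicalType} (A : set T) (f : T -> U)
    (x : T) :=
  forall V, open V -> V (f x) ->
    exists Q, [/\ open Q, Q x & forall y, A y -> Q y -> V (f y)].

Lemma continuous_withinP {T U : topologicalType} (A : set T) (f : T -> U) :
  {within A, continuous f} <-> forall x, A x -> continuous_in_at A f x.
Proof.
rewrite subspace_continuousP; split.
  move=> fc x Ax V oV Vfx.
  have := fc x Ax V (open_nbhs_nbhs (conj oV Vfx)).
  rewrite nbhs_simpl /= /within /= nbhsE => -[Q [oQ Qx] QV].
  by exists Q; split => // y Ay Qy; apply: QV.
move=> fc x Ax Y; rewrite nbhsE => -[V [oV Vfx] VY].
have [Q [oQ Qx QV]] := fc x Ax V oV Vfx.
rewrite nbhs_simpl /= /within /= nbhsE; exists Q; first by split.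
by move=> y Qy Ay; apply: VY; apply: QV.
Qed.

Section ContinuousInAt.
Context {T U W : topologicalType}.
Implicit Types (A B : set T) (f g : T -> U).

Lemma continuous_in_atS A B f x :
  B `<=` A -> continuous_in_at A f x -> continuous_in_at B f x.
Proof.
move=> BA fc V oV Vx; have [Q [oQ Qx QV]] := fc V oV Vx.
by exists Q; split => // y /BA; apply: QV.
Qed.

Lemma continuous_in_at_comp A (B : set U) f (h : U -> W) x :
  f @` A `<=` B -> continuous_in_at A f x -> continuous_in_at B h (f x) ->
  continuous_in_at A (h \o f) x.
Proof.
move=> fAB fc hc V oV Vx; have [Q [oQ Qx QV]] := hc V oV Vx.
have [Q' [oQ' Qx' QV']] := fc Q oQ Qx.
exists Q'; split => // y Ay Q'y /=.
by apply: QV; [apply: fAB; exists y | apply: QV'].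
Qed.

Lemma continuous_in_at_eq A f g x : A x -> {in A, f =1 g} ->
  continuous_in_at A f x -> continuous_in_at A g x.
Proof.
move=> Ax fg fc V oV; rewrite -fg ?inE // => Vx.
have [Q [oQ Qx QV]] := fc V oV Vx.
by exists Q; split => // y Ay Qy; rewrite -fg ?inE //; apply: QV.
Qed.

Lemma continuous_in_at_id (A : set U) x : continuous_in_at A id x.
Proof. by move=> V oV Vx; exists V; split. Qed.

Lemma continuous_in_at_local A Q f x : open Q -> Q x ->
  continuous_in_at (A `&` Q) f x -> continuous_in_at A f x.
Proof.
move=> oQ Qx fc V oV Vx; have [P [oP Px PV]] := fc V oV Vx.
exists (P `&` Q); split => //; first exact: openI.
by move=> y Ay [Py Qy]; apply: PV.
Qed.

Lemma open_preimage_in A f V : (forall x, A x -> continuous_in_at A f x) ->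
  open V -> exists Q, open Q /\ forall y, A y -> Q y <-> V (f y).
Proof.
move=> fc oV.
exists (\bigcup_(P in [set P | open P /\ forall y, A y -> P y -> V (f y)]) P).
split; first by apply: bigcup_open => P [].
move=> y Ay; split; first by case=> P [_ PV] Py; apply: PV.
by move=> Vy; have [Q [oQ Qy QV]] := fc y Ay V oV Vy; exists Q.
Qed.

Lemma continuous_in_at_pair (C : set (U * U)) (h : U * U -> W) A f g x :
  {within C, continuous h} -> (forall y, A y -> C (f y, g y)) -> A x ->
  continuous_in_at A f x -> continuous_in_at A g x ->
  continuous_in_at A (fun y => h (f y, g y)) x.
Proof.
move=> /continuous_withinP hc ACfg Ax fc gc V oV Vx.
have [Q [oQ Qx QV]] := hc _ (ACfg x Ax) V oV Vx.
have [[P1 P2] /= [nP1 nP2] P12Q] := open_nbhs_nbhs (conj oQ Qx).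
move: nP1 nP2; rewrite !nbhsE => -[P1' [oP1' P1'x] P1P] [P2' [oP2' P2'x] P2P].
have [R1 [oR1 R1x R1P]] := fc P1' oP1' P1'x.
have [R2 [oR2 R2x R2P]] := gc P2' oP2' P2'x.
exists (R1 `&` R2); split => //; first exact: openI.
move=> y Ay [R1y R2y]; apply: QV; first exact: ACfg.
by apply: P12Q; split; [apply: P1P; apply: R1P | apply: P2P; apply: R2P].
Qed.
End ContinuousInAt.

Definition open_embedding_on {T U : topologicalType} (A : set T) (B : set U)
    (f : T -> U) (Q : set T) :=
  [/\ open Q, {in Q `&` A &, injective f} &
      forall W, open W -> rel_open B (f @` (W `&` Q `&` A))].

Section OpenEmbedding.
Context {T U : topologicalType} (A : set T) (B : set U) (f : T -> U).

Lemma open_embedding_onI Q P :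
  open_embedding_on A B f Q -> open P -> open_embedding_on A B f (Q `&` P).
Proof.
case=> oQ finj fopen oP; split; first exact: openI.
  by move=> x y; rewrite !inE => -[[Qx _] Ax] [[Qy _] Ay]; apply: finj; rewrite inE.
move=> W oW; have [V oV e] := fopen (W `&` P) (openI oW oP).
exists V => //; rewrite -e; congr (_ @` _).
by apply/seteqP; split => x /=; tauto.
Qed.

Lemma open_embedding_local_inverse Q (t0 : T) :
  open_embedding_on A B f Q -> f @` A `<=` B ->
  exists (h : U -> T) (D : set U),
   [/\ open D,
       forall x, Q x -> A x -> D (f x) /\ h (f x) = x,
       forall y, B y -> D y -> [/\ Q (h y), A (h y) & f (h y) = y] &
       forall y, B y -> D y -> continuous_in_at (B `&` D) h y].
Proof.
case=> oQ finj fopen fAB.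
pose h y := if pselect (exists x, [/\ Q x, A x & f x = y]) is left e
  then proj1_sig (cid e) else t0.
have hP y : (exists x, [/\ Q x, A x & f x = y]) -> [/\ Q (h y), A (h y) & f (h y) = y].
  by move=> ex; rewrite /h; case: pselect => // e; case: (cid e).
have [D oD eD] := fopen setT openT.
have DE y : B y -> D y -> exists x, [/\ Q x, A x & f x = y].
  move=> By Dy; have : (f @` (setT `&` Q `&` A)) y by rewrite eD.
  by case=> x [[_ Qx] Ax] <-; exists x.
exists h, D; split => //.
- move=> x Qx Ax; have : (f @` (setT `&` Q `&` A)) (f x) by exists x.
  rewrite eD => -[Dfx _]; split => //.
  have [Qh Ah eh] := hP (f x) (ex_intro _ x (And3 Qx Ax erefl)).
  by apply: finj; rewrite ?inE.
- by move=> y By Dy; apply: hP; apply: DE.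
move=> y By Dy W oW Why.
have [Qh Ah eh] := hP y (DE y By Dy).
have [P oP eP] := fopen W oW.
exists P; split => //.
  have : (f @` (W `&` Q `&` A)) y by exists (h y).
  by rewrite eP => -[].
move=> y' [By' Dy'] Py'.
have : (f @` (W `&` Q `&` A)) y' by rewrite eP.
case=> x [[Wx Qx] Ax] fx.
have [Qh' Ah' eh'] := hP y' (DE y' By' Dy').
suff -> : h y' = x by [].
by apply: finj; rewrite ?inE // eh' fx.
Qed.

Lemma local_homeo_of_local_inverse x0 Q (V : set U) (h : U -> T) :
  open Q -> Q x0 -> open V -> f @` A `<=` B ->
  (forall x, A x -> Q x -> V (f x) /\ h (f x) = x) ->
  (forall y, B y -> V y -> [/\ A (h y), Q (h y) & f (h y) = y]) ->
  (forall y, B y -> V y -> continuous_in_at (B `&` V) h y) ->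
  exists U0 : set T, [/\ open U0, U0 x0, {in U0 `&` A &, injective f} &
    forall W : set T, open W -> rel_open B (f @` (W `&` U0 `&` A))].
Proof.
move=> oQ Qx0 oV fAB hf fhy hc; exists Q; split => //.
  move=> x y; rewrite !inE => -[Qx Ax] [Qy Ay] e.
  by rewrite -(hf x Ax Qx).2 e (hf y Ay Qy).2.
move=> W oW.
have [P [oP eP]] := open_preimage_in (fun y '(conj By Vy) => hc y By Vy) oW.
exists (P `&` V); first exact: openI.
apply/seteqP; split.
  move=> y [x [[Wx Qx] Ax] <-]; have [Vf hfx] := hf x Ax Qx.
  have Bfx : B (f x) by apply: fAB; exists x.
  by split => //; split => //; apply/(eP (f x)) => //; rewrite hfx.
move=> y [[Py Vy] By]; have [Ah Qh fh] := fhy y By Vy.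
by exists (h y) => //; split => //; split => //; apply/(eP y).
Qed.
End OpenEmbedding.

(** * Compactness, separation and quasi-components *)

Section FiniteSubcover.
Context {T : topologicalType}.

Lemma compact_finite_subcover (I : choiceType) (D : set I) (f : I -> set T)
    (K : set T) :
  compact K -> (forall i, D i -> open (f i)) -> K `<=` \bigcup_(i in D) f i ->
  exists2 s : seq I, [set` s] `<=` D & K `<=` \bigcup_(i in [set` s]) f i.
Proof.
move=> cK fo Kcov; apply: contrapT => nfin.
pose uncovered (s : seq I) := K `\` \bigcup_(i in [set` s]) f i.
pose FF := filter_from [set s : seq I | [set` s] `<=` D] uncovered.
have FFF : ProperFilter FF.
  apply: filter_from_proper.
    apply: filter_from_filter; first by exists [::].
    move=> s1 s2 D1 D2; exists (s1 ++ s2).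
      by move=> i /=; rewrite mem_cat => /orP[/D1|/D2].
    move=> z [Kz nz]; split; split => // -[i /= si fi]; apply: nz;
      by exists i; rewrite //= mem_cat si ?orbT.
  move=> s Ds; apply: contrapT => ne; apply: nfin; exists s => // z Kz.
  by apply: contrapT => nz; apply: ne; exists z.
have FK : FF K by exists [::] => // z [].
have [x [Kx clx]] := cK FF FFF FK.
have [j Dj fj] := Kcov x Kx.
have Fj : FF (uncovered [:: j]) by exists [:: j] => // i /=; rewrite inE => /eqP ->.
have [z [[Kz nz] fz]] := clx _ _ Fj (open_nbhs_nbhs (conj (fo j Dj) fj)).
by apply: nz; exists j; rewrite //= inE.
Qed.

Lemma bigcap_seq_open (I : choiceType) (s : seq I) (f : I -> set T) :
  (forall i, i \in s -> open (f i)) -> open (\bigcap_(i in [set` s]) f i).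
Proof.
by move=> fo; rewrite bigcap_seq big_seq; apply: big_ind => //; [exact: openT|exact: openI].
Qed.
End FiniteSubcover.

Definition hausdorff_in {T : topologicalType} (A : set T) :=
  forall x y, A x -> A y -> x <> y -> exists U V,
    [/\ open U, open V, U x, V y & forall z, A z -> U z -> V z -> False].

Section HausdorffIn.
Context {T : topologicalType} (A : set T).

Lemma subspace_hausdorff_in : hausdorff_space (subspace A) -> hausdorff_in A.
Proof.
rewrite open_hausdorff => hA x y Ax Ay nxy.
have /hA [[P1 P2] /= [xP1 yP2] [oP1 oP2 /eqP P0]] : x != y by apply/eqP.
move: xP1 yP2; rewrite !inE => xP1 yP2.
have /open_subspaceP [V1 oV1 e1] := oP1.
have /open_subspaceP [V2 oV2 e2] := oP2.
have inV1 z : A z -> V1 z <-> P1 z by move=> Az; split => [V1z|P1z];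
  [by have [] : (P1 `&` A) z by rewrite -e1 | by have [] : (V1 `&` A) z by rewrite e1].
have inV2 z : A z -> V2 z <-> P2 z by move=> Az; split => [V2z|P2z];
  [by have [] : (P2 `&` A) z by rewrite -e2 | by have [] : (V2 `&` A) z by rewrite e2].
exists V1, V2; split => //; [exact/inV1|exact/inV2|].
move=> z Az /(inV1 z Az) P1z /(inV2 z Az) P2z.
by have : (P1 `&` P2) z by []; rewrite P0.
Qed.

Lemma hausdorff_inS (B : set T) : B `<=` A -> hausdorff_in A -> hausdorff_in B.
Proof.
move=> BA hA x y Bx By nxy; have [U [V [oU oV Ux Vy UV]]] := hA x y (BA x Bx) (BA y By) nxy.
by exists U, V; split => // z /BA; apply: UV.
Qed.

Hypothesis hA : hausdorff_in A.

Lemma separate_compact_point (K : set T) x : compact K -> K `<=` A -> A x -> ~ K x ->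
  exists U V, [/\ open U, open V, U x, K `<=` V &
     forall z, A z -> U z -> V z -> False].
Proof.
move=> cK KA Ax nKx.
have sep k : exists p : set T * set T, K k ->
   [/\ open p.1, open p.2, p.1 k, p.2 x & forall z, A z -> p.1 z -> p.2 z -> False].
  have [Kk|nKk] := pselect (K k); last by exists (setT, setT).
  have nkx : k <> x by move=> ekx; apply: nKx; rewrite -ekx.
  by have [U [V [oU oV Uk Vx UV]]] := hA (KA _ Kk) Ax nkx; exists (U, V).
have [e He] := choice sep.
have [s sK cov] : exists2 s : seq T, [set` s] `<=` K &
    K `<=` \bigcup_(k in [set` s]) (e k).1.
  apply: compact_finite_subcover => // [k /He[] //|k Kk].
  by exists k => //; case: (He k Kk).
exists (\bigcap_(k in [set` s]) (e k).2), (\bigcup_(k in [set` s]) (e k).1).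
split => //.
- by apply: bigcap_seq_open => k /sK Kk; case: (He k Kk).
- by apply: bigcup_open => k /sK Kk; case: (He k Kk).
- by move=> k /sK Kk; case: (He k Kk).
move=> z Az Vz [k sk e1z]; have [_ _ _ _ disj] := He k (sK k sk).
exact: disj z Az e1z (Vz k sk).
Qed.

Lemma separate_compacts (K1 K2 : set T) : compact K1 -> compact K2 ->
  K1 `<=` A -> K2 `<=` A -> (forall z, K1 z -> K2 z -> False) ->
  exists U1 U2, [/\ open U1, open U2, K1 `<=` U1, K2 `<=` U2 &
     forall z, A z -> U1 z -> U2 z -> False].
Proof.
move=> cK1 cK2 K1A K2A K12.
have sep k : exists p : set T * set T, K1 k ->
   [/\ open p.1, open p.2, p.1 k, K2 `<=` p.2 & forall z, A z -> p.1 z -> p.2 z -> False].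
  have [Kk|nKk] := pselect (K1 k); last by exists (setT, setT).
  have [U [V ?]] := separate_compact_point cK2 K2A (K1A _ Kk) (K12 k Kk).
  by exists (U, V).
have [e He] := choice sep.
have [s sK cov] : exists2 s : seq T, [set` s] `<=` K1 &
    K1 `<=` \bigcup_(k in [set` s]) (e k).1.
  apply: compact_finite_subcover => // [k /He[] //|k Kk].
  by exists k => //; case: (He k Kk).
exists (\bigcup_(k in [set` s]) (e k).1), (\bigcap_(k in [set` s]) (e k).2).
split => //.
- by apply: bigcup_open => k /sK Kk; case: (He k Kk).
- by apply: bigcap_seq_open => k /sK Kk; case: (He k Kk).
- by move=> z K2z k /sK Kk; case: (He k Kk) => _ _ _ /(_ z K2z).
move=> z Az [k sk e1z] Vz; have [_ _ _ _ disj] := He k (sK k sk).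
exact: disj z Az e1z (Vz k sk).
Qed.
End HausdorffIn.

Definition rel_clopen {T : topologicalType} (K C : set T) :=
  C `<=` K /\ exists W1 W2, [/\ open W1, open W2 &
     forall z, K z -> (C z <-> W1 z) /\ (~ C z <-> W2 z)].

Section RelClopen.
Context {T : topologicalType} (K : set T).

Lemma rel_clopen_refl : rel_clopen K K.
Proof.
split => //; exists setT, set0; split; [exact: openT|exact: open0|].
by move=> z Kz; split; split.
Qed.

Lemma rel_clopenI C1 C2 : rel_clopen K C1 -> rel_clopen K C2 ->
  rel_clopen K (C1 `&` C2).
Proof.
case=> C1K [P1 [Q1 [oP1 oQ1 e1]]] [C2K [P2 [Q2 [oP2 oQ2 e2]]]].
split; first by move=> z [/C1K].
exists (P1 `&` P2), (Q1 `|` Q2); split; [exact: openI|exact: openU|].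
move=> z Kz; have [a1 b1] := e1 z Kz; have [a2 b2] := e2 z Kz; split.
  by rewrite /setI /= a1 a2.
split; last by case=> q [c1 c2]; [apply: (proj2 b1 q) | apply: (proj2 b2 q)].
move=> nC12; have [c1|] := pselect (C1 z); last by left; apply/b1.
by right; apply/b2 => c2; apply: nC12.
Qed.

Lemma rel_clopen_bigcap (I : choiceType) (s : seq I) (C : I -> set T) :
  (forall i, i \in s -> rel_clopen K (C i)) ->
  rel_clopen K (K `&` \bigcap_(i in [set` s]) C i).
Proof.
move=> Cc; rewrite bigcap_seq big_seq.
apply: (big_ind (fun D => rel_clopen K (K `&` D))); first by rewrite setIT; exact: rel_clopen_refl.
  by move=> D1 D2 c1 c2; rewrite setIIr; apply: rel_clopenI.
by move=> i si; rewrite setIidr //; case: (Cc i si).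
Qed.

Lemma rel_clopen_compact C : compact K -> rel_clopen K C -> compact C.
Proof.
move=> cK [CK [W1 [W2 [_ oW2 e]]]].
suff -> : C = K `&` ~` W2 by apply: compact_closedI => //; apply: open_closedC.
apply/seteqP; split => z.
  by move=> Cz; split; [exact: CK | have [_ [_ W2C]] := e z (CK z Cz); by move=> /W2C/(_ Cz)].
case=> Kz nW2; have [_ [CW2 _]] := e z Kz.
by apply: contrapT => nC; apply: nW2; exact: CW2.
Qed.

Lemma rel_clopen_splitI (A : set T) C U1 U2 : K `<=` A -> rel_clopen K C ->
  open U1 -> open U2 -> (forall z, A z -> U1 z -> U2 z -> False) ->
  C `<=` U1 `|` U2 -> rel_clopen K (C `&` U1).
Proof.
move=> KA [CK [W1 [W2 [oW1 oW2 e]]]] oU1 oU2 U12 CU.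
split; first by move=> z [/CK].
exists (W1 `&` U1), (W2 `|` U2); split; [exact: openI|exact: openU|].
move=> z Kz; have [a b] := e z Kz; split.
  by split => -[c u]; split => //; apply/a.
split; last first.
  case=> [w2 [c _]|u2 [_ u1]]; first exact: (proj2 b w2 c).
  exact: U12 z (KA z Kz) u1 u2.
move=> nCU1; have [c|] := pselect (C z); last by left; apply/b.
by have [u1|u2] := CU z c; [exfalso; apply: nCU1 | right].
Qed.
End RelClopen.

Definition quasi_component {T : topologicalType} (K : set T) (x : T) :=
  [set z | K z /\ forall C, rel_clopen K C -> C x -> C z].

Section QuasiComponent.
Context {T : topologicalType} (K : set T) (x : T) (cK : compact K) (Kx : K x).
Local Notation Q := (quasi_component K x).

Lemma quasi_component_compact : compact Q.
Proof.
suff -> : Q = K `&` \bigcap_(C in [set C | rel_clopen K C /\ C x]) closure C.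
  by apply: compact_closedI => //; apply: closed_bigI => C _; exact: closed_closure.
apply/seteqP; split => z.
  by case=> Kz Qz; split => // C [cC Cx]; apply: subset_closure; apply: Qz.
case=> Kz clz; split => // C cC Cx.
have [CK [W1 [W2 [_ oW2 e]]]] := cC.
have CW2 : C `<=` ~` W2.
  by move=> y Cy W2y; have [_ [_ /(_ W2y)]] := e y (CK y Cy); apply.
have : (~` W2) z.
  rewrite (closure_id (~` W2)).1; last exact: open_closedC.
  exact: (closureS CW2) (clz C (conj cC Cx)).
move=> nW2z; apply: contrapT => nCz; apply: nW2z; exact: (e z Kz).2.1.
Qed.

Lemma rel_clopen_avoid (L : set T) : compact L -> L `<=` K -> Q `&` L = set0 ->
  exists C, [/\ rel_clopen K C, C x & C `&` L = set0].
Proof.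
move=> cL LK QL.
pose outside C := \bigcup_(W in [set W | open W /\ forall y, K y -> W y -> ~ C y]) W.
have [s sS Lcov] : exists2 s : seq (set T),
    [set` s] `<=` [set C | rel_clopen K C /\ C x] &
    L `<=` \bigcup_(C in [set` s]) outside C.
  apply: compact_finite_subcover => // [C _|z Lz]; first by apply: bigcup_open => W [].
  have /existsNP [C /not_implyP [cC /not_implyP [Cx nCz]]] :
      ~ (forall C, rel_clopen K C -> C x -> C z).
    move=> Qz; suff : (Q `&` L) z by rewrite QL.
    by split => //; split => //; exact: LK.
  have [_ [W1 [W2 [_ oW2 e]]]] := cC.
  exists C => //; exists W2; last exact/(e z (LK z Lz)).2.
  by split => // y Ky /(e y Ky).2.
exists (K `&` \bigcap_(C in [set` s]) C); split.
- by apply: rel_clopen_bigcap => C /sS [].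
- by split => // C /sS [].
apply/seteqP; split => // z [[Kz Cz] Lz].
have [C sC [W [_ WC] Wz]] := Lcov z Lz.
exact: WC z Kz Wz (Cz C sC).
Qed.

Context (A : set T) (hA : hausdorff_in A) (KA : K `<=` A).

Lemma quasi_component_refl : Q x.
Proof. by split => // C []. Qed.

(* Q and its part outside P are disjoint compacta; separating them by disjoint
   open sets and avoiding the rest of K yields a relatively clopen set of K that
   contains Q yet misses Q `\` P. *)
Lemma quasi_component_clopen P : (exists2 Op, open Op & P = Q `&` Op) ->
  (exists2 Cl, closed Cl & P = Q `&` Cl) -> P x -> P = Q.
Proof.
move=> [Op oOp ePO] [Cl cCl ePC] Px.
have QA : Q `<=` A by move=> z [/KA].
have cQ := quasi_component_compact.
have [U1 [U2 [oU1 oU2 PU1 RU2 U12]]] : exists U1 U2, [/\ open U1, open U2,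
    P `<=` U1, Q `&` ~` Op `<=` U2 & forall z, A z -> U1 z -> U2 z -> False].
  apply: separate_compacts => //.
  - by rewrite ePC; apply: compact_closedI.
  - by apply: compact_closedI => //; exact: open_closedC.
  - by rewrite ePO => z [/QA].
  - by move=> z [/QA].
  by rewrite ePO => z [_ ?] [_].
have QU : Q `<=` U1 `|` U2.
  move=> z Qz; have [Opz|nOpz] := pselect (Op z).
    by left; apply: PU1; rewrite ePO.
  by right; apply: RU2.
have QL : Q `&` (K `&` ~` (U1 `|` U2)) = set0.
  by apply/seteqP; split => // z [Qz [_ /(_ (QU z Qz))]].
have [C [cC Cx CL]] := rel_clopen_avoid
  (compact_closedI cK (open_closedC (openU oU1 oU2))) (@subIsetl _ _ _) QL.
have CU : C `<=` U1 `|` U2.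
  move=> z Cz; apply: contrapT => nU; have : (C `&` (K `&` ~` (U1 `|` U2))) z.
    by split => //; split => //; case: cC => /(_ z Cz).
  by rewrite CL.
have QU1 : Q `<=` U1.
  have cCU1 : rel_clopen K (C `&` U1) := rel_clopen_splitI KA cC oU1 oU2 U12 CU.
  by move=> z [_ /(_ _ cCU1 (conj Cx (PU1 x Px)))] [].
apply/seteqP; split; first by rewrite ePO => z [].
move=> z Qz; have [Opz|nOpz] := pselect (Op z); first by rewrite ePO.
by exfalso; apply: (U12 z (QA z Qz) (QU1 z Qz)); apply: RU2.
Qed.

Lemma quasi_component_connected : connected Q.
Proof.
move=> P [z Pz] [Op oOp ePO] [Cl cCl ePC].
have [Px|nPx] := pselect (P x).
  by apply: quasi_component_clopen => //; [exists Op|exists Cl].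
exfalso.
have inP y : Q y -> (P y <-> Op y) /\ (P y <-> Cl y).
  by move=> Qy; split; [rewrite ePO | rewrite ePC]; split => [[]|].
have QP : Q `&` ~` Op = Q.
  apply: quasi_component_clopen.
  - exists (~` Cl); first exact: closed_openC.
    apply/seteqP; split => y [Qy nOy]; split => // Oy; apply: nOy.
      by apply/(inP y Qy).1; apply/(inP y Qy).2.
    by apply/(inP y Qy).2; apply/(inP y Qy).1.
  - by exists (~` Op) => //; exact: open_closedC.
  by split; [exact: quasi_component_refl | move=> /(inP x quasi_component_refl).1].
have Qz : Q z by move: Pz; rewrite ePO => -[].
have : (Q `&` ~` Op) z by rewrite QP.
by case=> _; apply; apply/(inP z Qz).1.
Qed.

Lemma rel_clopen_nbhd O : connected_component K x `<=` [set x] -> open O -> O x ->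
  exists C, [/\ rel_clopen K C, C x & C `<=` O].
Proof.
move=> Kx1 oO Ox.
have Qx1 : Q `<=` [set x].
  apply: subset_trans Kx1; apply: connected_component_max.
  - exact: quasi_component_refl.
  - by move=> z [].
  exact: quasi_component_connected.
have QL : Q `&` (K `&` ~` O) = set0 by apply/seteqP; split => // z [/Qx1 -> [_]].
have [C [cC Cx CL]] := rel_clopen_avoid
  (compact_closedI cK (open_closedC oO)) (@subIsetl _ _ _) QL.
exists C; split => // z Cz; apply: contrapT => nOz.
have : (C `&` (K `&` ~` O)) z by split => //; split => //; case: cC => /(_ z Cz).
by rewrite CL.
Qed.
End QuasiComponent.

(** * Groupoids and etale groupoids *)

Section GroupoidTheory.
Context {T : topologicalType} (G : groupoid_data T) (hG : is_groupoid G).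
Local Notation A := (garr G).
Local Notation r := (grg G).
Local Notation s := (gsr G).
Local Notation m := (gmul G).
Local Notation i := (ginv G).

Lemma garr_grg g : A g -> A (r g). Proof. by case: hG => h _ _ _ _ /h []. Qed.
Lemma garr_gsr g : A g -> A (s g). Proof. by case: hG => h _ _ _ _ /h []. Qed.
Lemma grg_grg g : A g -> r (r g) = r g. Proof. by case: hG => h _ _ _ _ /h [_ _ []]. Qed.
Lemma grg_gsr g : A g -> r (s g) = s g. Proof. by case: hG => h _ _ _ _ /h [_ _ _ []]. Qed.
Lemma gsr_gsr g : A g -> s (s g) = s g. Proof. by case: hG => h _ _ _ _ /h [_ _ _ []]. Qed.

Lemma garr_gmul g h : composable G g h -> A (m g h).
Proof. by case: hG => _ H _ _ _ /H []. Qed.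
Lemma grg_gmul g h : composable G g h -> r (m g h) = r g.
Proof. by case: hG => _ H _ _ _ /H []. Qed.
Lemma gsr_gmul g h : composable G g h -> s (m g h) = s h.
Proof. by case: hG => _ H _ _ _ /H []. Qed.
Lemma gmulA g h k : composable G g h -> composable G h k ->
  m (m g h) k = m g (m h k).
Proof. by case: hG => _ _ H _ _; apply: H. Qed.
Lemma gmul_grg g : A g -> m (r g) g = g. Proof. by case: hG => _ _ _ H _ /H []. Qed.
Lemma gmul_gsr g : A g -> m g (s g) = g. Proof. by case: hG => _ _ _ H _ /H []. Qed.

Lemma garr_ginv g : A g -> A (i g). Proof. by case: hG => _ _ _ _ H /H []. Qed.
Lemma grg_ginv g : A g -> r (i g) = s g. Proof. by case: hG => _ _ _ _ H /H []. Qed.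
Lemma gsr_ginv g : A g -> s (i g) = r g. Proof. by case: hG => _ _ _ _ H /H []. Qed.
Lemma gmulgV g : A g -> m g (i g) = r g. Proof. by case: hG => _ _ _ _ H /H []. Qed.
Lemma gmulVg g : A g -> m (i g) g = s g. Proof. by case: hG => _ _ _ _ H /H []. Qed.

Lemma units_garr x : units G x -> A x. Proof. by case=> g Ag <-; apply: garr_grg. Qed.
Lemma grg_unit x : units G x -> r x = x. Proof. by case=> g Ag <-; apply: grg_grg. Qed.
Lemma units_grg g : A g -> units G (r g). Proof. by move=> Ag; exists g. Qed.
Lemma units_gsr g : A g -> units G (s g).
Proof. by move=> Ag; exists (s g); [apply: garr_gsr | apply: grg_gsr]. Qed.

Lemma composableI g h : A g -> A h -> s g = r h -> composable G g h.
Proof. by move=> *; split. Qed.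

Lemma ginvK g : A g -> i (i g) = g.
Proof.
move=> Ag; have Aig := garr_ginv Ag; have Aiig := garr_ginv Aig.
have c1 : composable G g (i g) by apply: composableI => //; rewrite grg_ginv.
have c2 : composable G (i g) (i (i g)).
  by apply: composableI => //; rewrite grg_ginv // gsr_ginv.
rewrite -[LHS]gmul_grg // grg_ginv // gsr_ginv // -gmulgV // gmulA // gmulgV //.
by rewrite grg_ginv // gmul_gsr.
Qed.

Lemma ginv_inj g h : A g -> A h -> i g = i h -> g = h.
Proof. by move=> Ag Ah e; rewrite -(ginvK Ag) e ginvK. Qed.

Lemma gmulK g h : A g -> A h -> s g = r h -> m (m g h) (i h) = g.
Proof.
move=> Ag Ah gh.
have c1 : composable G g h by apply: composableI.
have c2 : composable G h (i h).
  by apply: composableI => //; [exact: garr_ginv | rewrite grg_ginv].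
by rewrite (gmulA c1 c2) gmulgV // -gh gmul_gsr.
Qed.

Lemma gmul_conjK a g b : A a -> A g -> A b -> s a = r g -> s g = s b ->
  m (i a) (m (m (m a g) (i b)) b) = g.
Proof.
move=> Aa Ag Ab ag gb.
have cag : composable G a g by apply: composableI.
have Aag := garr_gmul cag; have Aib := garr_ginv Ab.
have c2 : composable G (m a g) (i b).
  by apply: composableI => //; rewrite gsr_gmul // grg_ginv.
have c3 : composable G (i b) b by apply: composableI => //; rewrite gsr_ginv.
rewrite (gmulA c2 c3) gmulVg // -gb -(gsr_gmul cag) gmul_gsr //.
have c4 : composable G (i a) a.
  by apply: composableI => //; [exact: garr_ginv | rewrite gsr_ginv].
by rewrite -(gmulA c4 cag) gmulVg // ag gmul_grg.
Qed.

Lemma gmul_conj_split a g b h d : A a -> A g -> A b -> A h -> A d ->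
  r a = r g -> s g = r b -> r b = r h -> s h = r d ->
  m (i a) (m (m g h) d) = m (m (i a) (m g b)) (m (i b) (m h d)).
Proof.
move=> Aa Ag Ab Ah Ad ag gb bh hd.
have cgh : composable G g h by apply: composableI => //; rewrite gb.
have chd : composable G h d by apply: composableI.
have cgb : composable G g b by apply: composableI.
have Aia := garr_ginv Aa; have Aib := garr_ginv Ab.
have Ahd := garr_gmul chd; have Agb := garr_gmul cgb.
have cia : composable G (i a) (m g b).
  by apply: composableI => //; rewrite gsr_ginv // grg_gmul.
have cib : composable G (i b) (m h d).
  by apply: composableI => //; rewrite gsr_ginv // grg_gmul.
have Aibhd := garr_gmul cib.
have cX : composable G (m g b) (m (i b) (m h d)).
  by apply: composableI => //; rewrite gsr_gmul // grg_gmul // grg_ginv.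
have cY : composable G b (m (i b) (m h d)).
  by apply: composableI => //; rewrite grg_gmul // grg_ginv.
have cbib : composable G b (i b) by apply: composableI => //; rewrite grg_ginv.
rewrite (gmulA cgh chd) (gmulA cia cX) (gmulA cgb cY) -(gmulA cbib cib).
by rewrite gmulgV // bh -(grg_gmul chd) gmul_grg.
Qed.

Definition conj_sec (th : T -> T) g := m (i (th (r g))) (m g (th (s g))).

Section ConjSec.
Context (th : T -> T)
  (hth : forall x, units G x -> A (th x) /\ r (th x) = x).

Lemma conj_sec_spec g : A g ->
  [/\ composable G g (th (s g)),
      composable G (i (th (r g))) (m g (th (s g))),
      A (conj_sec th g), r (conj_sec th g) = s (th (r g)) &
      s (conj_sec th g) = s (th (s g))].
Proof.
move=> Ag; have [Athr rthr] := hth (units_grg Ag).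
have [Aths rths] := hth (units_gsr Ag).
have c1 : composable G g (th (s g)) by apply: composableI.
have c2 : composable G (i (th (r g))) (m g (th (s g))).
  apply: composableI => //; [exact: garr_ginv | exact: garr_gmul |].
  by rewrite gsr_ginv // rthr grg_gmul.
split => //; first exact: garr_gmul c2.
  by rewrite /conj_sec grg_gmul // grg_ginv.
by rewrite /conj_sec !gsr_gmul.
Qed.

Lemma conj_sec_gmul g h : composable G g h ->
  composable G (conj_sec th g) (conj_sec th h) /\
  conj_sec th (m g h) = m (conj_sec th g) (conj_sec th h).
Proof.
move=> c; have [Ag [Ah gh]] := c.
have [_ _ Arg _ srg] := conj_sec_spec Ag.
have [_ _ Arh rrh _] := conj_sec_spec Ah.
split; first by apply: composableI => //; rewrite srg rrh gh.
have [Athr rthr] := hth (units_grg Ag); have [Aths rths] := hth (units_gsr Ag).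
have [Athh rthh] := hth (units_gsr Ah).
rewrite /conj_sec (grg_gmul c) (gsr_gmul c) -gh.
by apply: gmul_conj_split => //; rewrite ?rthr ?rths ?rthh.
Qed.

Lemma conj_sec_similar g : A g ->
  [/\ composable G (th (r g)) (conj_sec th g), composable G g (th (s g)) &
      m (th (r g)) (conj_sec th g) = m g (th (s g))].
Proof.
move=> Ag; have [c1 c2 Ar rr _] := conj_sec_spec Ag.
have [Athr rthr] := hth (units_grg Ag).
have ca : composable G (th (r g)) (i (th (r g))).
  by apply: composableI => //; [exact: garr_ginv | rewrite grg_ginv].
split => //; rewrite /conj_sec -(gmulA ca c2) gmulgV // rthr.
by rewrite -(grg_gmul c1) gmul_grg //; exact: garr_gmul.
Qed.
End ConjSec.
End GroupoidTheory.

Section EtaleGroupoid.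
Context {T : topologicalType} (G : groupoid_data T) (hE : etale_groupoid G).
Local Notation A := (garr G).
Local Notation r := (grg G).
Local Notation s := (gsr G).
Local Notation m := (gmul G).
Local Notation i := (ginv G).

Lemma etale_groupoidW : is_groupoid G. Proof. by case: hE => -[]. Qed.
Local Notation hG := etale_groupoidW.

Lemma grg_continuous_in_at g : A g -> continuous_in_at A r g.
Proof. by case: hE => -[_ /continuous_withinP + _ _ _] _ _ _; apply. Qed.
Lemma gsr_continuous_in_at g : A g -> continuous_in_at A s g.
Proof. by case: hE => -[_ _ /continuous_withinP + _ _] _ _ _; apply. Qed.
Lemma ginv_continuous_in_at g : A g -> continuous_in_at A i g.
Proof. by case: hE => -[_ _ _ /continuous_withinP + _] _ _ _; apply. Qed.
Lemma gmul_continuous : {within [set p : T * T | composable G p.1 p.2],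
  continuous (fun p => m p.1 p.2)}.
Proof. by case: hE => -[]. Qed.

Lemma garr_hausdorff_in : hausdorff_in A.
Proof. by case: hE => _ /subspace_hausdorff_in. Qed.

Lemma grg_open_embedding a : A a ->
  exists Q, Q a /\ open_embedding_on A (units G) r Q.
Proof.
case: hE => _ _ _ [_ _ rloc] /rloc [Q [oQ Qa rinj ropen]].
by exists Q; split => //; split.
Qed.

Lemma gsr_open_embedding a : A a ->
  exists Q, Q a /\ open_embedding_on A (units G) s Q.
Proof.
move=> Aa; have [Q [Qia [oQ rinj ropen]]] := grg_open_embedding (garr_ginv hG Aa).
have [P [oP eP]] := open_preimage_in ginv_continuous_in_at oQ.
exists P; split; first exact/eP.
split => //.
  move=> x y; rewrite !inE => -[Px Ax] [Py Ay] e.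
  apply: (ginv_inj hG) => //; apply: rinj; rewrite ?inE.
  - by split; [apply/eP | apply: (garr_ginv hG)].
  - by split; [apply/eP | apply: (garr_ginv hG)].
  by rewrite !(grg_ginv hG).
move=> W oW.
have [W' [oW' eW']] := open_preimage_in ginv_continuous_in_at oW.
have [V oV eV] := ropen W' oW'.
exists V => //; rewrite -eV; apply/seteqP; split.
  move=> y [x [[Wx Px] Ax] <-]; exists (i x); last by rewrite (grg_ginv hG).
  split; [split|]; last exact: (garr_ginv hG).
    by apply/eW'; [apply: (garr_ginv hG) | rewrite (ginvK hG)].
  exact/eP.
move=> y [x [[W'x Qx] Ax] <-]; exists (i x); last by rewrite (gsr_ginv hG).
have Aix := garr_ginv hG Ax.
split; [split|] => //; first exact: (eW' x Ax).1.
by apply/eP => //; rewrite (ginvK hG).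
Qed.

Lemma bisection_nbhd a : A a -> exists Q,
  [/\ Q a, open_embedding_on A (units G) r Q & open_embedding_on A (units G) s Q].
Proof.
move=> Aa; have [Q1 [Q1a rQ1]] := grg_open_embedding Aa.
have [Q2 [Q2a sQ2]] := gsr_open_embedding Aa.
exists (Q1 `&` Q2); split => //; first by apply: open_embedding_onI => //; case: sQ2.
by rewrite setIC; apply: open_embedding_onI => //; case: rQ1.
Qed.

(* Near a unit, a continuous section [th] of [r] takes values in a bisection,
   on which [s] is injective and open: so [s \o th] has a continuous local
   inverse [psi]. *)
Lemma section_gsr_local_inverse (th : T -> T) x0 :
  (forall x, units G x -> A (th x) /\ r (th x) = x) ->
  (forall x, units G x -> continuous_in_at (units G) th x) -> units G x0 ->
  exists N M (psi : T -> T),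
  [/\ open N /\ N x0, open M,
   forall x, units G x -> N x -> M (s (th x)) /\ psi (s (th x)) = x,
   forall y, units G y -> M y -> [/\ units G (psi y), N (psi y) & s (th (psi y)) = y] &
   forall y, units G y -> M y -> continuous_in_at (units G `&` M) psi y].
Proof.
move=> hth thc ux0; have [Aa0 ra0] := hth x0 ux0.
have [Q [Qa0 rQ sQ]] := bisection_nbhd Aa0.
have oQ : open Q by case: rQ.
have [N [oN eN]] := open_preimage_in thc oQ.
have [Nr [oNr eNr]] := open_preimage_in grg_continuous_in_at oN.
have sA : s @` A `<=` units G.
  move=> _ [g Ag <-]; exact: (@units_gsr _ G hG g Ag).
have [sig [D [oD sigs ssig sigc]]] :=
  open_embedding_local_inverse (th x0) (open_embedding_onI sQ oNr) sA.
exists N, D, (fun y => r (sig y)); split => //.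
- by split => //; exact/eN.
- move=> x ux Nx; have [Ath rth] := hth x ux.
  have Nrth : Nr (th x) by apply/(eNr _ Ath); rewrite rth.
  have [Dx ex] := sigs (th x) (conj ((eN x ux).1 Nx) Nrth) Ath.
  by rewrite ex rth.
- move=> y uy Dy; have [[Qs Nrs] As es] := ssig y uy Dy.
  have Nrs' := (eNr _ As).1 Nrs; have urs := units_grg As.
  split => //; have [Ath rth] := hth _ urs.
  suff -> : th (r (sig y)) = sig y by [].
  case: rQ => _ rinj _; apply: rinj; rewrite ?inE //.
  by split => //; exact/eN.
- move=> y uy Dy; have [_ Asig _] := ssig y uy Dy.
  apply: (continuous_in_at_comp (B := A)); last exact: grg_continuous_in_at.
    by move=> _ [z [uz Dz] <-]; case: (ssig z uz Dz).
  exact: sigc.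
Qed.
End EtaleGroupoid.

(** * Reduction along a continuous section *)

Section SectionReduction.
Context {T : topologicalType} (G : groupoid_data T) (hE : etale_groupoid G).
Context (F : set T) (th : T -> T) (thc : {within units G, continuous th})
  (hth : forall x, units G x -> [/\ garr G (th x), grg G (th x) = x & F (gsr G (th x))]).
Local Notation A := (garr G).
Local Notation r := (grg G).
Local Notation s := (gsr G).
Local Notation m := (gmul G).
Local Notation i := (ginv G).
Local Notation B := (garr (reduction G F)).
Local Notation hG := (etale_groupoidW hE).
Local Notation rho := (conj_sec G th).

Let thsec x : units G x -> A (th x) /\ r (th x) = x.
Proof. by case/hth. Qed.

Let thc_at : forall x, units G x -> continuous_in_at (units G) th x.
Proof. exact/continuous_withinP. Qed.

Lemma garr_reduction g : B g <-> [/\ A g, F (r g) & F (s g)].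
Proof. by split; [case=> -[] | case]. Qed.

Lemma garr_reduction_open (hFo : rel_open (units G) F) :
  exists P, open P /\ forall g, A g -> P g <-> B g.
Proof.
case: hFo => V oV eF.
have [Pr [oPr ePr]] := open_preimage_in (grg_continuous_in_at hE) oV.
have [Ps [oPs ePs]] := open_preimage_in (gsr_continuous_in_at hE) oV.
exists (Pr `&` Ps); split; first exact: openI.
move=> g Ag; have ur := units_grg Ag; have us := units_gsr hG Ag.
rewrite garr_reduction eF; split.
  by case=> /(ePr g Ag) ? /(ePs g Ag) ?.
by case=> _ [? _] [? _]; split; [apply/(ePr g Ag) | apply/(ePs g Ag)].
Qed.

Lemma section_comp_continuous_in_at (D : set T) (f : T -> T) g : D g ->
  f @` D `<=` units G -> continuous_in_at D f g -> continuous_in_at D (th \o f) g.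
Proof.
by move=> Dg fD fc; apply: (continuous_in_at_comp fD fc); apply/thc_at/fD; exists g.
Qed.

Lemma conj_sec_continuous_in_at g : A g -> continuous_in_at A rho g.
Proof.
move=> Ag.
have rA : r @` A `<=` units G by move=> _ [h Ah <-]; exact: units_grg.
have sA : s @` A `<=` units G by move=> _ [h Ah <-]; exact: (@units_gsr _ G hG).
have thrc : continuous_in_at A (fun g => i (th (r g))) g.
  apply: (continuous_in_at_comp (B := A) (f := th \o r)).
  - by move=> _ [h Ah <-]; apply: (thsec (units_grg Ah)).1.
  - by apply: section_comp_continuous_in_at => //; exact: grg_continuous_in_at.
  exact/ginv_continuous_in_at/(thsec (units_grg Ag)).1.
have thsc : continuous_in_at A (fun g => m g (th (s g))) g.
  apply: (continuous_in_at_pair (gmul_continuous hE) (f := id) (g := th \o s)) => //.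
  - by move=> h Ah /=; case: (conj_sec_spec hG thsec Ah).
  - exact: continuous_in_at_id.
  by apply: section_comp_continuous_in_at => //; exact: gsr_continuous_in_at.
apply: (continuous_in_at_pair (gmul_continuous hE) (f := fun g => i (th (r g)))
  (g := fun g => m g (th (s g)))) => //.
by move=> h Ah /=; case: (conj_sec_spec hG thsec Ah).
Qed.

Lemma garr_reduction_conj_sec g : A g -> B (rho g).
Proof.
move=> Ag; have [_ _ Ar rr sr] := conj_sec_spec hG thsec Ag.
apply/garr_reduction; split => //.
  by rewrite rr; case: (hth (units_grg Ag)).
by rewrite sr; case: (hth (units_gsr hG Ag)).
Qed.

Section Unconj.
Variables (N1 M1 N2 M2 : set T) (p1 p2 : T -> T).
Hypotheses
  (p1K : forall x, units G x -> N1 x -> M1 (s (th x)) /\ p1 (s (th x)) = x)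
  (p1P : forall y, units G y -> M1 y -> [/\ units G (p1 y), N1 (p1 y) & s (th (p1 y)) = y])
  (p1c : forall y, units G y -> M1 y -> continuous_in_at (units G `&` M1) p1 y)
  (p2K : forall x, units G x -> N2 x -> M2 (s (th x)) /\ p2 (s (th x)) = x)
  (p2P : forall y, units G y -> M2 y -> [/\ units G (p2 y), N2 (p2 y) & s (th (p2 y)) = y])
  (p2c : forall y, units G y -> M2 y -> continuous_in_at (units G `&` M2) p2 y).

(* The local inverse of [conj_sec th]; [p1], [p2] invert [s \o th] locally. *)
Definition unconj y := m (m (th (p1 (r y))) y) (i (th (p2 (s y)))).

Lemma unconj_spec y : B y -> M1 (r y) -> M2 (s y) ->
  [/\ composable G (th (p1 (r y))) y,
      composable G (m (th (p1 (r y))) y) (i (th (p2 (s y)))),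
      A (unconj y), r (unconj y) = p1 (r y) & s (unconj y) = p2 (s y)].
Proof.
move=> /garr_reduction [Ay _ _] M1y M2y.
have [u1 _ e1] := p1P (units_grg Ay) M1y.
have [u2 _ e2] := p2P (units_gsr hG Ay) M2y.
have [Aa ra] := thsec u1; have [Ab rb] := thsec u2.
have cay : composable G (th (p1 (r y))) y by apply: composableI.
have c2 : composable G (m (th (p1 (r y))) y) (i (th (p2 (s y)))).
  apply: composableI; [exact: (garr_gmul hG) | exact: (garr_ginv hG) |].
  by rewrite (gsr_gmul hG cay) (grg_ginv hG).
split => //; first exact: (garr_gmul hG) c2.
  by rewrite /unconj (grg_gmul hG c2) (grg_gmul hG cay) ra.
by rewrite /unconj (gsr_gmul hG c2) (gsr_ginv hG) // rb.
Qed.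

Lemma conj_sec_unconj y : B y -> M1 (r y) -> M2 (s y) -> rho (unconj y) = y.
Proof.
move=> By M1y M2y; have [Ay _ _] := (garr_reduction y).1 By.
have [_ _ _ rk sk] := unconj_spec By M1y M2y.
have [u1 _ e1] := p1P (units_grg Ay) M1y.
have [u2 _ e2] := p2P (units_gsr hG Ay) M2y.
rewrite /conj_sec rk sk /unconj; apply: (gmul_conjK hG) => //.
- exact: (thsec u1).1.
- exact: (thsec u2).1.
Qed.

Lemma unconj_conj_sec x : A x -> N1 (r x) -> N2 (s x) ->
  [/\ M1 (r (rho x)), M2 (s (rho x)) & unconj (rho x) = x].
Proof.
move=> Ax N1x N2x; have [_ _ _ rr sr] := conj_sec_spec hG thsec Ax.
have [M1x p1x] := p1K (units_grg Ax) N1x.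
have [M2x p2x] := p2K (units_gsr hG Ax) N2x.
split; [by rewrite rr | by rewrite sr |].
have [_ _ e] := conj_sec_similar hG thsec Ax.
rewrite /unconj rr sr p1x p2x e; apply: (gmulK hG) => //.
- exact: (thsec (units_gsr hG Ax)).1.
- by rewrite (thsec (units_gsr hG Ax)).2.
Qed.

Lemma unconj_continuous_in_at (D : set T) y :
  D `<=` [set z | B z /\ M1 (r z) /\ M2 (s z)] -> D y ->
  continuous_in_at D unconj y.
Proof.
move=> Ddom Dy; have [By [M1y M2y]] := Ddom y Dy.
have DA : D `<=` A by move=> z /Ddom [/garr_reduction[]].
have th1c : continuous_in_at D (th \o (p1 \o r)) y.
  apply: section_comp_continuous_in_at => //.
    by move=> _ [z /Ddom [/garr_reduction [Az _ _] [M1z _]] <-]; case: (p1P (units_grg Az) M1z).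
  apply: (continuous_in_at_comp (B := units G `&` M1)).
  - by move=> _ [z /Ddom [/garr_reduction [Az _ _] [M1z _]] <-]; split => //; exact: units_grg.
  - exact: continuous_in_atS DA (grg_continuous_in_at hE (DA y Dy)).
  exact/p1c/M1y/units_grg/DA.
have th2c : continuous_in_at D (i \o (th \o (p2 \o s))) y.
  have [u2 _ _] := p2P (units_gsr hG (DA y Dy)) M2y.
  apply: (continuous_in_at_comp (B := A)).
  - by move=> _ [z /Ddom [/garr_reduction [Az _ _] [_ M2z]] <-];
      case: (p2P (units_gsr hG Az) M2z) => /thsec[].
  - apply: section_comp_continuous_in_at => //.
      by move=> _ [z /Ddom [/garr_reduction [Az _ _] [_ M2z]] <-]; case: (p2P (units_gsr hG Az) M2z).
    apply: (continuous_in_at_comp (B := units G `&` M2)).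
    + by move=> _ [z /Ddom [/garr_reduction [Az _ _] [_ M2z]] <-]; split => //; exact: (units_gsr hG).
    + exact: continuous_in_atS DA (gsr_continuous_in_at hE (DA y Dy)).
    exact/p2c/M2y/(units_gsr hG)/DA.
  exact/ginv_continuous_in_at/(thsec u2).1.
have th1yc : continuous_in_at D (fun z => m (th (p1 (r z))) z) y.
  apply: (continuous_in_at_pair (gmul_continuous hE) (f := th \o (p1 \o r)) (g := id)) => //.
    by move=> z /Ddom [Bz [M1z M2z]]; case: (unconj_spec Bz M1z M2z).
  exact: continuous_in_at_id.
apply: (continuous_in_at_pair (gmul_continuous hE) (f := fun z => m (th (p1 (r z))) z)
  (g := i \o (th \o (p2 \o s)))) => //.
by move=> z /Ddom [Bz [M1z M2z]]; case: (unconj_spec Bz M1z M2z).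
Qed.
End Unconj.

Lemma conj_sec_etale : etale_homomorphism G (reduction G F) rho.
Proof.
have rhoB : rho @` A `<=` B by move=> _ [g Ag <-]; exact: garr_reduction_conj_sec.
have rhoc : {within A, continuous rho}.
  by apply/continuous_withinP => g; exact: conj_sec_continuous_in_at.
split; split => //.
  move=> g h c; have [Ag [Ah _]] := c; have [cr e] := conj_sec_gmul hG thsec c.
  split => //; split; first exact: garr_reduction_conj_sec.
  by split; [exact: garr_reduction_conj_sec | case: cr => _ []].
move=> g0 Ag0.
have [N1 [M1 [p1 [[oN1 N1g0] oM1 p1K p1P p1c]]]] :=
  section_gsr_local_inverse hE thsec thc_at (units_grg Ag0).
have [N2 [M2 [p2 [[oN2 N2g0] oM2 p2K p2P p2c]]]] :=
  section_gsr_local_inverse hE thsec thc_at (units_gsr hG Ag0).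
have [Q1 [oQ1 eQ1]] := open_preimage_in (grg_continuous_in_at hE) oN1.
have [Q2 [oQ2 eQ2]] := open_preimage_in (gsr_continuous_in_at hE) oN2.
have [V1 [oV1 eV1]] := open_preimage_in (grg_continuous_in_at hE) oM1.
have [V2 [oV2 eV2]] := open_preimage_in (gsr_continuous_in_at hE) oM2.
have domV y : B y -> (V1 `&` V2) y -> M1 (r y) /\ M2 (s y).
  by move=> /garr_reduction [Ay _ _] [/(eV1 y Ay) ? /(eV2 y Ay) ?].
apply: (local_homeo_of_local_inverse (Q := Q1 `&` Q2) (V := V1 `&` V2)
  (h := unconj p1 p2)); [exact: openI | | exact: openI | exact: rhoB | | |].
- by split; [apply/(eQ1 _ Ag0) | apply/(eQ2 _ Ag0)].
- move=> x Ax [/(eQ1 x Ax) N1x /(eQ2 x Ax) N2x].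
  have [M1x M2x ->] := unconj_conj_sec p1K p2K Ax N1x N2x.
  have [_ _ Arho _ _] := conj_sec_spec hG thsec Ax.
  by split => //; split; [apply/(eV1 _ Arho) | apply/(eV2 _ Arho)].
- move=> y By /(domV y By) [M1y M2y]; have [_ _ Ak rk sk] := unconj_spec p1P p2P By M1y M2y.
  have [Ay _ _] := (garr_reduction y).1 By.
  split => //; last exact: (conj_sec_unconj p1P p2P By M1y M2y).
  split; [apply/(eQ1 _ Ak); rewrite rk | apply/(eQ2 _ Ak); rewrite sk].
    by case: (p1P _ (units_grg Ay) M1y).
  by case: (p2P _ (units_gsr hG Ay) M2y).
move=> y By Vy; apply: (unconj_continuous_in_at p1P p1c p2P p2c) => //.
by move=> z [Bz /(domV z Bz)].
Qed.

Lemma inclusion_etale (hFo : rel_open (units G) F) :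
  etale_homomorphism (reduction G F) G id.
Proof.
have BA : B `<=` A by move=> g /garr_reduction[].
have idc (X : set T) : {within X, continuous id}.
  by apply/continuous_withinP => x _; exact: continuous_in_at_id.
split; split => //; first by move=> _ [g /BA ? <-].
- move=> g h [Bg [Bh gh]]; split => //.
  by split; [exact: BA | split; [exact: BA |]].
- by move=> _ [g /BA ? <-].
move=> x Bx; have [P [oP eP]] := garr_reduction_open hFo.
exists setT; split => //; first exact: openT.
move=> W oW; exists (W `&` P); first exact: openI.
apply/seteqP; split.
  by move=> _ [g [[Wg _] Bg] <-]; split; [split => //; apply/(eP g (BA g Bg)) | exact: BA].
by move=> g [[Wg Pg] Ag]; exists g => //; split => //; apply/(eP g Ag).
Qed.

Lemma conj_sec_similar_id : Defs.similar G G (id \o rho) id.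
Proof.
exists th; split => //; first by move=> _ [x ux <-]; exact: (thsec ux).1.
by move=> g Ag; have [c1 c2 e] := conj_sec_similar hG thsec Ag; split.
Qed.

Lemma conj_sec_similar_reduction : Defs.similar (reduction G F) (reduction G F) (rho \o id) id.
Proof.
have unitsB : units (reduction G F) `<=` units G.
  by move=> _ [g /garr_reduction [Ag _ _] <-]; exact: units_grg.
have thB x : units (reduction G F) x -> B (th x).
  move=> [g /garr_reduction [Ag Fr _] <-]; have [Ath rth Fth] := hth (units_grg Ag).
  by apply/garr_reduction; split => //; rewrite rth.
exists th; split.
- by apply/continuous_withinP => x /unitsB ux; exact: continuous_in_atS unitsB (thc_at ux).
- by move=> _ [x /thB ? <-].
move=> g Bg; have [Ag _ _] := (garr_reduction g).1 Bg.
have [c1 c2 e] := conj_sec_similar hG thsec Ag.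
have urB : units (reduction G F) (r g) by exists g.
have usB : units (reduction G F) (s g).
  case/garr_reduction: Bg => _ _ Fs; exists (s g); last exact: (grg_gsr hG Ag).
  apply/garr_reduction; rewrite (grg_gsr hG Ag) (gsr_gsr hG Ag).
  by split => //; exact: (garr_gsr hG).
split.
- split; first exact: thB.
  by split; [exact: garr_reduction_conj_sec | case: c1 => _ []].
- split => //.
  by split; [exact: thB | case: c2 => _ []].
- exact: e.
Qed.

Theorem homologically_similar_reduction_of_section (hFo : rel_open (units G) F) :
  homologically_similar G (reduction G F).
Proof.
exists rho, id; split.
- exact: conj_sec_etale.
- exact: inclusion_etale.
- exact: conj_sec_similar_id.
- exact: conj_sec_similar_reduction.
Qed.
End SectionReduction.

(** * Gluing local sections *)

Definition section_patch {T U : topologicalType} (X : set T) (P : T -> U -> Prop)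
    (C : set T) (tau : T -> U) :=
  [/\ compact C, rel_open X C, forall z, C z -> P z (tau z) &
      forall z, C z -> continuous_in_at C tau z].

Section Gluing.
Context {T U : topologicalType} (X : set T) (hX : hausdorff_in X)
  (P : T -> U -> Prop) (C : nat -> set T) (tau : nat -> T -> U)
  (Cpatch : forall k, section_patch X P (C k) (tau k))
  (Ccov : X `<=` \bigcup_k C k).

Definition first_patch x :=
  xget 0%N [set k | C k x /\ forall j, (j < k)%N -> ~ C j x].

Definition glued x := tau (first_patch x) x.

Lemma patch_sub k : C k `<=` X.
Proof. by case: (Cpatch k) => _ [V _ ->] _ _ z []. Qed.

Lemma first_patch_spec x : X x ->
  C (first_patch x) x /\ forall j, (j < first_patch x)%N -> ~ C j x.
Proof.
move=> Xx; have [k _ Ckx] := Ccov Xx.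
have exC : exists k, `[< C k x >] by exists k; exact: asboolT.
have exmin : exists m, C m x /\ forall j, (j < m)%N -> ~ C j x.
  case: (ex_minnP exC) => m /asboolP Cm mmin; exists m; split => // j jm Cj.
  by have := mmin j (asboolT Cj); rewrite leqNgt jm.
exact: (xgetPex 0%N exmin).
Qed.

Lemma first_patch_eq x k : C k x -> (forall j, (j < k)%N -> ~ C j x) ->
  first_patch x = k.
Proof.
move=> Ckx kmin; have [C1 m1] := first_patch_spec (patch_sub Ckx).
apply/eqP; rewrite eqn_leq; apply/andP; split; rewrite leqNgt; apply/negP => lt.
  exact: m1 lt Ckx.
exact: kmin lt C1.
Qed.

Lemma glued_spec x : X x -> P x (glued x).
Proof. by move=> /first_patch_spec [Cx _]; case: (Cpatch (first_patch x)) => _ _ + _; apply. Qed.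

(* Each patch is compact, hence separated from any point outside it. *)
Lemma patches_avoid_nbhd x k : X x -> (forall j, (j < k)%N -> ~ C j x) ->
  exists V, [/\ open V, V x & forall z, X z -> V z -> forall j, (j < k)%N -> ~ C j z].
Proof.
move=> Xx; elim: k => [|k IH] kmin; first by exists setT; split => //; exact: openT.
have [V [oV Vx Vmin]] := IH (fun j jk => kmin j (ltnW jk)).
have [cC _ _ _] := Cpatch k.
have [V' [W [oV' oW V'x CW V'W]]] :=
  separate_compact_point hX cC (@patch_sub k) Xx (kmin k (ltnSn k)).
exists (V `&` V'); split => //; first exact: openI.
move=> z Xz [Vz V'z] j; rewrite ltnS leq_eqVlt => /orP[/eqP -> Ckz|]; last exact: Vmin.
exact: V'W z Xz V'z (CW z Ckz).
Qed.

Lemma glued_continuous : {within X, continuous glued}.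
Proof.
apply/continuous_withinP => x Xx; have [Ckx kmin] := first_patch_spec Xx.
have [V [oV Vx Vmin]] := patches_avoid_nbhd Xx kmin.
have [_ [W oW CW] _ tauc] := Cpatch (first_patch x).
have XVW : X `&` (V `&` W) `<=` C (first_patch x).
  by move=> z [Xz [_ Wz]]; rewrite CW.
apply: (continuous_in_at_local (Q := V `&` W)); first exact: openI.
  by split => //; move: Ckx; rewrite CW => -[].
apply: (continuous_in_at_eq (f := tau (first_patch x))).
- by split => //; split => //; move: Ckx; rewrite CW => -[].
- move=> z; rewrite inE => -[Xz [Vz Wz]]; rewrite /glued (first_patch_eq (XVW z _)) //.
  exact: Vmin.
exact: continuous_in_atS XVW (tauc x Ckx).
Qed.
End Gluing.

(* Choose a patch at every point, finitely many of them cover each compact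
   piece of [X], and index all those finite families by [nat] via [pickle]. *)
Lemma countable_patch_cover {T : topologicalType} (X : set T) (P : T -> T -> Prop) :
  sigma_compact X -> (forall x, X x -> exists C tau, C x /\ section_patch X P C tau) ->
  exists (C : nat -> set T) (tau : nat -> T -> T),
    (forall k, section_patch X P (C k) (tau k)) /\ X `<=` \bigcup_k C k.
Proof.
move=> [K [Kc XK]] hpatch.
have patch0 : section_patch X P set0 id.
  by split => //; [exact: compact0 | exists set0; rewrite ?set0I //; exact: open0].
have pick x : exists p : set T * (T -> T) * set T,
    [/\ X x -> p.1.1 x, section_patch X P p.1.1 p.1.2 & open p.2 /\ p.1.1 = p.2 `&` X].
  have [Xx|nXx] := pselect (X x); last first.
    by exists (set0, id, set0); split => //=; split; [exact: open0 | rewrite set0I].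
  have [C [tau [Cx Cp]]] := hpatch x Xx; have [_ [V oV CV] _ _] := Cp.
  by exists (C, tau, V).
have [p hp] := choice pick.
have cover n : exists s : seq T, K n `<=` \bigcup_(y in [set` s]) (p y).2.
  have [cK KX] := Kc n.
  have [s _ Kcov] : exists2 s : seq T, [set` s] `<=` X &
      K n `<=` \bigcup_(y in [set` s]) (p y).2.
    apply: compact_finite_subcover => // [y _|z Kz]; first by case: (hp y) => _ _ [].
    exists z; first exact: KX.
    by case: (hp z) => /(_ (KX z Kz)) + _ [_ e]; rewrite e => -[].
  by exists s.
have [sq hsq] := choice cover.
pose center k := if @unpickle (nat * nat)%type k is Some (n, j) then onth (sq n) j else None.
exists (fun k => if center k is Some y then (p y).1.1 else set0).
exists (fun k => if center k is Some y then (p y).1.2 else id); split.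
  by move=> k; case: (center k) => [y|] //; case: (hp y).
move=> x Xx; have := Xx; rewrite XK => -[n _ Knx].
have [y sy Oyx] := hsq n x Knx.
have [j ej] := onthP sy.
exists (pickle (n, j)) => //; rewrite /center pickleK ej.
by have [_ _ [_ ->]] := hp y.
Qed.

Section EtaleUnits.
Context {T : topologicalType} (G : groupoid_data T) (hE : etale_groupoid G).
Local Notation A := (garr G).
Local Notation r := (grg G).
Local Notation s := (gsr G).
Local Notation hG := (etale_groupoidW hE).

(* Units are the fixed points of [r], a closed condition in the Hausdorff
   space of arrows. *)
Lemma units_closed_in : exists2 Z, closed Z & forall z, A z -> Z z <-> units G z.
Proof.
pose Z := ~` \bigcup_(W in [set W | open W /\ forall w, A w -> W w -> ~ units G w]) W.
exists Z; first by apply: open_closedC; apply: bigcup_open => W [].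
move=> z Az; split; last by move=> uz [W [_ Wnu] Wz]; exact: Wnu z Az Wz uz.
move=> Zz; apply: contrapT => nuz.
have rzz : r z <> z by move=> e; apply: nuz; exists z.
have [U1 [U2 [oU1 oU2 U1rz U2z U12]]] :=
  garr_hausdorff_in hE (garr_grg hG Az) Az rzz.
have [W [oW Wz WU1]] := grg_continuous_in_at hE Az oU1 U1rz.
apply: Zz; exists (W `&` U2); last by split.
split; first exact: openI.
move=> w Aw [Ww U2w] uw; apply: (U12 w Aw) => //.
by rewrite -(grg_unit hG uw); exact: WU1.
Qed.

Lemma units_locally_compact x : units G x -> exists V K,
  [/\ open V, V x, compact K, V `&` units G `<=` K & K `<=` units G].
Proof.
move=> ux; have Ax := units_garr hG ux.
have [V [K [oV Vx cK VK KA]]] : exists V K, [/\ open V, V x, compact K,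
    V `&` A `<=` K & K `<=` A] by case: hE => _ _ + _; apply.
have [Z cZ eZ] := units_closed_in.
exists V, (K `&` Z); split => //; first exact: compact_closedI.
  by move=> z [Vz uz]; have Az := units_garr hG uz; split; [apply: VK | apply/eZ].
by move=> z [Kz Zz]; apply/eZ => //; exact: KA.
Qed.

Lemma units_compact_open_nbhd x O : totally_disconnected (units G) ->
  units G x -> open O -> O x ->
  exists C, [/\ C x, C `<=` O, compact C & rel_open (units G) C].
Proof.
move=> tdU ux oO Ox.
have [V [K [oV Vx cK VK KU]]] := units_locally_compact ux.
have KA : K `<=` A by move=> z /KU; exact: (units_garr hG).
have Kx : K x by exact: VK (conj Vx ux).
have Kx1 : connected_component K x `<=` [set x].
  rewrite -(tdU x ux); apply: connected_component_max.
  - exact: connected_component_refl Kx.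
  - by move=> z /connected_component_sub /KU.
  - exact: component_connected.
have [C [cC Cx COV]] :=
  rel_clopen_nbhd cK Kx (garr_hausdorff_in hE) KA Kx1 (openI oO oV) (conj Ox Vx).
have [CK [W1 [W2 [oW1 oW2 e]]]] := cC.
exists C; split => //; first by move=> z /COV [].
  exact: rel_clopen_compact cK cC.
exists (W1 `&` V); first exact: openI.
apply/seteqP; split => z.
  move=> Cz; have [inC _] := e z (CK z Cz).
  by split; [split; [exact/inC | case: (COV z Cz)] | exact: KU (CK z Cz)].
by case=> -[W1z Vz] uz; have Kz := VK z (conj Vz uz); exact/(e z Kz).1.
Qed.

Context (F : set T) (hFo : rel_open (units G) F) (hfull : full G F).

(* Fullness gives an arrow [g] from [x] into [F]; inverting [r] near [g]
   spreads it to a continuous local section, still landing in [F]. *)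
Lemma full_local_section x : units G x ->
  exists tau D, [/\ open D, D x,
    forall y, units G y -> D y -> [/\ A (tau y), r (tau y) = y & F (s (tau y))] &
    forall y, units G y -> D y -> continuous_in_at (units G `&` D) tau y].
Proof.
move=> ux; have [g [Ag rg Fs]] := hfull ux.
have [Q [Qg rQ]] := grg_open_embedding hE Ag.
case: hFo => V oV eF.
have [Ps [oPs ePs]] := open_preimage_in (gsr_continuous_in_at hE) oV.
have rA : r @` A `<=` units G by move=> _ [h Ah <-]; exact: units_grg.
have [tau [D [oD taur rtau tauc]]] :=
  open_embedding_local_inverse g (open_embedding_onI rQ oPs) rA.
have Psg : Ps g by apply/(ePs g Ag); move: Fs; rewrite eF => -[].
have [Dx _] := taur g (conj Qg Psg) Ag.
exists tau, D; split => //; first by rewrite -rg.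
move=> y uy Dy; have [[_ Pst] At rt] := rtau y uy Dy.
split => //; rewrite eF; split; first exact/(ePs _ At).
exact: (units_gsr hG At).
Qed.

Lemma section_patch_nbhd : totally_disconnected (units G) -> forall x, units G x ->
  exists C tau, C x /\
    section_patch (units G) (fun z g => [/\ A g, r g = z & F (s g)]) C tau.
Proof.
move=> tdU x ux; have [tau [D [oD Dx tauP tauc]]] := full_local_section ux.
have [C [Cx CD cC [V oV CV]]] := units_compact_open_nbhd tdU ux oD Dx.
have CU : C `<=` units G by rewrite CV => z [].
exists C, tau; split => //; split => //; first by exists V.
  by move=> z Cz; apply: tauP; [exact: CU | exact: CD].
move=> z Cz; apply: continuous_in_atS (tauc z (CU z Cz) (CD z Cz)).
by move=> w Cw; split; [exact: CU | exact: CD].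
Qed.

Lemma continuous_section_exists : sigma_compact (units G) ->
  totally_disconnected (units G) -> exists theta : T -> T,
    {within units G, continuous theta} /\
    (forall x, units G x -> [/\ A (theta x), r (theta x) = x & F (s (theta x))]).
Proof.
move=> scU tdU.
have [C [tau [Cpatch Ccov]]] := countable_patch_cover scU (section_patch_nbhd tdU).
have hU : hausdorff_in (units G).
  exact: hausdorff_inS (units_garr hG) (garr_hausdorff_in hE).
exists (glued C tau); split; first exact: (glued_continuous hU Cpatch Ccov).
by move=> x ux; exact: (glued_spec Cpatch Ccov ux).
Qed.
End EtaleUnits.

Theorem theorem3p6 (T : topologicalType) (G : groupoid_data T) (F : set T) :
  etale_groupoid G -> F `<=` units G -> rel_open (units G) F -> full G F ->
  ((exists theta : T -> T,
      {within units G, continuous theta} /\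
      (forall x, units G x ->
         [/\ garr G (theta x), grg G (theta x) = x & F (gsr G (theta x))])) ->
    homologically_similar G (reduction G F)) /\
  (sigma_compact (units G) -> totally_disconnected (units G) ->
    homologically_similar G (reduction G F)).
Proof.
move=> hE _ hFo hfull; split.
  by case=> th [thc hth]; exact: homologically_similar_reduction_of_section.
move=> scU tdU; have [th [thc hth]] := continuous_section_exists hE hFo hfull scU tdU.
exact: homologically_similar_reduction_of_section thc hth hFo.
Qed.
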